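(* Let $(G,k)$ be an instance, let $v$ be a large-sparse vertex, and let $B\subseteq V\setminus\{v\}$ with $|B|\le 2k$ be such that $G-B$ has no cycle passing through $v$. Let $C$ be a connected component of $G-v-B$ that contains a neighbor of $v$, is a tree, and has no vertex adjacent to a vertex of $B$. Then $(G,k)$ is a yes-instance if and only if $(G-V(C),k)$ is a yes-instance.
   Context: Graphs are undirected, without self-loops, possibly with multi-edges. $N(v)$ is the set of vertices adjacent to $v$; $\rho(v)$ is the number of unordered pairs $\{u_1,u_2\}\subseteq N(v)$ joined by at least one edge. A vertex $v$ is large-sparse if $|N(v)|>7k$ and $\rho(v)\le |N(v)|(|N(v)|-1)/4$. A vertex set induces a clique if between any two distinct vertices there is exactly one edge, and a tree if it is connected and acyclic (two parallel edges form a cycle). A feasible solution is $X\subseteq V$, $|X|\le k$, with every component of $G-X$ a clique or a tree; $(G,k)$ is a yes-instance if a feasible solution exists. *)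

(* A multigraph on a finite vertex type T is given by a
   vertex set V : {set T} together with an edge-multiplicity function
   m : T -> T -> nat (symmetric, zero on the diagonal: no self-loops).
   Only edges between vertices of V are relevant; the subgraph induced by
   a set S is obtained by restricting attention to S. *)
From mathcomp Require Import all_boot all_order.
Set Implicit Arguments. Unset Strict Implicit. Unset Printing Implicit Defensive.

Section Graphs.
Variable T : finType.
Variable m : T -> T -> nat.

Definition multigraph := (forall x y, m x y = m y x) /\ (forall x, m x x = 0).

Definition adj (x y : T) : bool := 0 < m x y.

Definition nbhd (V : {set T}) (v : T) : {set T} := [set u in V | (u != v) && adj v u].

Definition rho (V : {set T}) (v : T) : nat :=
  #|[set E : {set T} | (E \subset nbhd V v) &&
      [exists x, exists y, (x != y) && (E == [set x; y]) && adj x y]]|.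

Definition large_sparse (V : {set T}) (k : nat) (v : T) : bool :=
  (7 * k < #|nbhd V v|) && (4 * rho V v <= #|nbhd V v| * (#|nbhd V v| - 1)).

Definition adj_in (S : {set T}) : rel T := fun x y => [&& x \in S, y \in S & adj x y].

(* a cycle in the subgraph induced by S, given as a sequence of distinct
   vertices: either two vertices joined by at least two parallel edges, or
   at least three vertices cyclically adjacent *)
Definition is_cycle (S : {set T}) (s : seq T) : bool :=
  [&& uniq s, all (mem S) s &
    match s with
    | [:: a; b] => 1 < m a b
    | _ => (2 < size s) && cycle adj s
    end].

Definition acyclic_set (S : {set T}) : Prop := forall s, ~~ is_cycle S s.

Definition connected_set (S : {set T}) : Prop :=
  forall x y, x \in S -> y \in S -> connect (adj_in S) x y.

Definition is_clique (S : {set T}) : Prop :=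
  forall x y, x \in S -> y \in S -> x != y -> m x y = 1.

Definition is_tree (S : {set T}) : Prop := connected_set S /\ acyclic_set S.

Definition comp_of (W : {set T}) (x : T) : {set T} := [set y in W | connect (adj_in W) x y].

Definition is_component (W C : {set T}) : Prop := exists2 x, x \in W & C = comp_of W x.

Definition feasible (V : {set T}) (k : nat) (X : {set T}) : Prop :=
  [/\ X \subset V, #|X| <= k &
    forall C, is_component (V :\: X) C -> is_clique C \/ is_tree C].

Definition yes_instance (V : {set T}) (k : nat) : Prop := exists X, feasible V k X.

Definition cycle_through (W : {set T}) (v : T) : Prop :=
  exists s, is_cycle W s /\ v \in s.

End Graphs.

From mathcomp Require Import all_boot all_order.
From mathcomp Require Import zify.
Set Implicit Arguments. Unset Strict Implicit. Unset Printing Implicit Defensive.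

(* Deleting vertices keeps a solution a solution, since components of the smaller graph
   sit inside components of the larger one.  Conversely let [X] solve [G - C].  As [C] has
   no neighbour in [B], its only neighbour outside itself is [v]; so a component of [G - X]
   missing [C] is a component of [G - C - X], and if [v \in X] the component meeting [C] is
   [C] itself.  If [v \notin X], the component [D] of [v] in [G - X] is [C] glued at [v] to
   the component [K] of [v] in [G - C - X].  A cycle of [D] meeting [C] would pass through
   [v] inside [C + v], or lie in the tree [C]; a cycle avoiding [C] lies in [K], which
   then cannot be a tree, and cannot be a clique either: a clique through [v] has at most
   one vertex outside [B] besides [v] (else a triangle through [v] avoids [B]), and [v] has
   at most one neighbour in [C] (else a cycle through [v] avoids [B]), leaving [v] with at
   most [3k + 2 <= 7k] neighbours (for [k = 0], [B] is empty and [K] has at most two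
   vertices, too few for a cycle). *)

Section Components.
Variables (T : finType) (m : T -> T -> nat).
Hypothesis graph_m : multigraph m.

Lemma adj_sym : symmetric (adj m).
Proof. by case: graph_m => msym _ x y; rewrite /adj msym. Qed.

Lemma adj_in_sym (S : {set T}) : symmetric (adj_in m S).
Proof. by move=> x y; rewrite /adj_in adj_sym; case: (x \in S); case: (y \in S). Qed.

Lemma connect_adj_in_sub (S S' : {set T}) x y :
  S \subset S' -> connect (adj_in m S) x y -> connect (adj_in m S') x y.
Proof.
move=> sSS'; apply: connect_sub => a b /and3P[aS bS ab]; apply: connect1.
by rewrite /adj_in (subsetP sSS' _ aS) (subsetP sSS' _ bS).
Qed.

Lemma comp_of_sub (W : {set T}) x : comp_of m W x \subset W.
Proof. by apply/subsetP=> y; rewrite inE => /andP[]. Qed.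

Lemma mem_comp_of (W : {set T}) x : x \in W -> x \in comp_of m W x.
Proof. by move=> xW; rewrite inE xW connect0. Qed.

Lemma component_sub (W C : {set T}) : is_component m W C -> C \subset W.
Proof. by case=> x _ ->; exact: comp_of_sub. Qed.

Lemma comp_of_connect_in (W : {set T}) x y z :
  y \in comp_of m W x -> connect (adj_in m W) y z ->
  connect (adj_in m (comp_of m W x)) y z.
Proof.
move=> yK /connectP[p + ->]; elim: p y yK => [|w p IHp] y yK /=; first by rewrite connect0.
case/andP=> yw wp.
have wK : w \in comp_of m W x.
  move: yK; rewrite !inE => /andP[_ xy]; case/and3P: (yw) => _ -> _ /=.
  exact: connect_trans xy (connect1 yw).
apply: connect_trans (IHp w wK wp); apply: connect1.
by rewrite /adj_in yK wK; case/and3P: yw.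
Qed.

Lemma comp_of_connected (W : {set T}) x : connected_set m (comp_of m W x).
Proof.
move=> a b aK bK; apply: (comp_of_connect_in aK).
move: (aK) bK; rewrite !inE => /andP[_ xa] /andP[_ xb].
by apply: connect_trans _ xb; rewrite (sym_connect_sym (adj_in_sym W)).
Qed.

Lemma comp_of_eq (W : {set T}) x y : y \in comp_of m W x -> comp_of m W x = comp_of m W y.
Proof.
rewrite inE => /andP[_ xy]; apply/setP=> z; rewrite !inE.
by rewrite (same_connect (sym_connect_sym (adj_in_sym W)) xy).
Qed.

Lemma comp_of_restrict (W W' : {set T}) x :
  x \in W -> W' \subset W -> comp_of m W x \subset W' -> comp_of m W x = comp_of m W' x.
Proof.
move=> xW sW'W sKW'; apply/setP=> y; apply/idP/idP => [yK|].
- rewrite inE (subsetP sKW' _ yK); apply: connect_adj_in_sub sKW' _.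
  apply: comp_of_connect_in (mem_comp_of xW) _; by move: yK; rewrite inE => /andP[].
- rewrite !inE => /andP[yW' xy]; rewrite (subsetP sW'W _ yW').
  exact: connect_adj_in_sub sW'W xy.
Qed.

Lemma path_adj_in (S : {set T}) x p :
  path (adj_in m S) x p -> {subset p <= S} /\ path (adj m) x p.
Proof.
elim: p x => [|y p IHp] x //= /andP[/and3P[_ yS xy] /IHp[pS yp]].
by split=> [z|]; rewrite ?xy // inE => /orP[/eqP -> //|/pS].
Qed.

Lemma path_adj_in_intro (S : {set T}) x p :
  path (adj m) x p -> {subset x :: p <= S} -> path (adj_in m S) x p.
Proof.
elim: p x => [|y p IHp] x //= /andP[xy yp] sub.
rewrite /adj_in xy (sub x) ?(sub y) ?inE ?eqxx ?orbT //=.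
by apply: IHp yp _ => z zp; apply: sub; rewrite inE zp orbT.
Qed.

Lemma is_cycle_sub (S S' : {set T}) s :
  is_cycle m S s -> {subset s <= S'} -> is_cycle m S' s.
Proof. by case/and3P=> us _ cs sS'; rewrite /is_cycle us cs andbT; apply/allP. Qed.

Lemma is_cycleP (S : {set T}) s :
  is_cycle m S s -> [/\ uniq s, {subset s <= S}, 1 < size s & cycle (adj m) s].
Proof.
case/and3P=> us /allP sS cs; split => //.
- by case: s cs {us sS} => [|x [|y [|z t]]].
- case: s cs {us sS} => [|x [|y [|z t]]] //= mxy.
  by rewrite /adj (ltn_trans _ mxy) // (proj1 graph_m) (ltn_trans _ mxy).
Qed.

(* A 2-cycle is a double edge, which a clique does not have. *)
Lemma clique_cycle_size (S : {set T}) s : is_clique m S -> is_cycle m S s -> 2 < size s.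
Proof.
move=> Scl cs; case: (is_cycleP cs) => us sS s_gt1 _.
case: s s_gt1 us sS cs => [|a [|b [|z t]]] // _ us sS /and3P[_ _ mab].
have ab : a != b by move: us; rewrite /= inE andbT.
by rewrite (Scl a b (sS a (mem_head _ _)) (sS b (mem_last a [:: b])) ab) in mab.
Qed.

Lemma yes_instance_setD (V C : {set T}) k :
  yes_instance m V k -> yes_instance m (V :\: C) k.
Proof.
case=> X [XV Xk solX]; exists (X :\: C); split.
- by apply/subsetP => y; rewrite !inE => /andP[-> /(subsetP XV) ->].
- exact: leq_trans (subset_leq_card (subsetDl X C)) Xk.
move=> _ [x xW ->].
have sW : (V :\: C) :\: (X :\: C) \subset V :\: X.
  by apply/subsetP => y; rewrite !inE; case: (y \in X); case: (y \in C).
have sK : comp_of m ((V :\: C) :\: (X :\: C)) x \subset comp_of m (V :\: X) x.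
  apply/subsetP => y; rewrite !inE => /andP[yW xy].
  by rewrite (connect_adj_in_sub sW xy) andbT; move: yW; case: (y \in X); case: (y \in C).
case: (solX (comp_of m (V :\: X) x)); first by exists x; first exact: (subsetP sW).
- by move=> Kcl; left => a b aK bK; apply: Kcl; exact: (subsetP sK).
- move=> [_ Kac]; right; split=> [|s]; first exact: comp_of_connected.
  apply/negP => cs; move/negP: (Kac s); apply; apply: (is_cycle_sub cs).
  by case: (is_cycleP cs) => _ sS _ _ z /sS /(subsetP sK).
Qed.

End Components.

Section CycleFreeAtVertex.
Variables (T : finType) (m : T -> T -> nat) (V B : {set T}) (v : T).
Hypotheses (graph_m : multigraph m) (vV : v \in V) (vNB : v \notin B).
Hypothesis no_cycle_v : ~ cycle_through m (V :\: B) v.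

(* Two vertices of [K :\ v :\: B] would span a triangle through [v] avoiding [B]. *)
Lemma clique_setD_card (K : {set T}) :
  v \in K -> K \subset V -> is_clique m K -> #|K :\ v :\: B| <= 1.
Proof.
move=> vK KV Kcl; apply/card_le1_eqP => a b.
move=> /setDP[/setD1P[av aK] aB] /setDP[/setD1P[bv bK] bB].
apply/eqP/negPn/negP => ab; apply: no_cycle_v; exists [:: v; a; b]; split; last exact: mem_head.
rewrite /is_cycle /= !inE !negb_or eq_sym av eq_sym bv eq_sym ab.
rewrite aB bB vNB vV (subsetP KV a aK) (subsetP KV b bK) /adj.
by rewrite (Kcl v a) ?(Kcl a b) ?(Kcl b v) // 1?eq_sym.
Qed.

Section ClosedComponent.
Variable C : {set T}.
Hypotheses (compC : is_component m (V :\ v :\: B) C)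
  (C_B : forall x y, x \in C -> y \in B -> ~~ adj m x y) (treeC : is_tree m C).

Lemma component_notin_v : v \notin C.
Proof. by apply/negP => /(subsetP (component_sub compC)); rewrite !inE eqxx andbF. Qed.

Lemma component_sub_setDB : C \subset V :\: B.
Proof.
by apply/subsetP => x /(subsetP (component_sub compC)); rewrite !inE => /and3P[-> _ ->].
Qed.

Lemma component_adj_mem x y : x \in C -> y \in V -> y != v -> adj m x y -> y \in C.
Proof.
move=> xC yV yv xy; have yNB : y \notin B by apply: contraL xy => /(C_B xC).
have yW : y \in V :\ v :\: B by rewrite !inE yNB yv yV.
case: compC xC => x0 _ ->; rewrite [x \in _]inE => /andP[xW x0x].
by rewrite inE yW; apply: connect_trans x0x (connect1 _); rewrite /adj_in xW yW xy.
Qed.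

Lemma path_mem_component a p :
  path (adj m) a p -> {subset a :: p <= V} -> v \notin a :: p ->
  forall z, z \in a :: p -> (z \in C) = (a \in C).
Proof.
elim: p a => [|w p IHp] a /=; first by move=> _ _ _ z; rewrite inE => /eqP ->.
case/andP=> aw wp sub; rewrite !inE !negb_or => /and3P[va vw vp].
have aV : a \in V by apply: sub; rewrite inE eqxx.
have wV : w \in V by apply: sub; rewrite !inE eqxx orbT.
have wCaC : (w \in C) = (a \in C).
  apply/idP/idP => [wC|aC]; last by apply: component_adj_mem aC wV _ aw; rewrite eq_sym.
  by apply: component_adj_mem wC aV _ _; rewrite 1?(adj_sym graph_m) // eq_sym.
move=> z /orP[/eqP -> //|zwp]; rewrite -wCaC; apply: IHp => //.
- by move=> t tp; apply: sub; rewrite inE tp orbT.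
- by rewrite inE negb_or vw.
Qed.

Lemma component_nbhd_card : #|nbhd m V v :&: C| <= 1.
Proof.
apply/card_le1_eqP => a b; rewrite !inE => /andP[/and3P[_ _ va] aC] /andP[/and3P[_ _ vb] bC].
apply/eqP/negPn/negP => ab; case: treeC => Ccon _.
case/connectP: (Ccon _ _ aC bC) => p0 /shortenP[p ap up _] bl.
case: (path_adj_in ap) => pC {}ap.
case: p ap up pC bl => [|w p] ap up pC bl; first by rewrite bl eqxx in ab.
have apC t : t \in a :: w :: p -> t \in C by rewrite inE => /orP[/eqP -> //|/pC].
apply: no_cycle_v; exists [:: v, a, w & p]; split; last exact: mem_head.
apply/and3P; split.
- by rewrite cons_uniq up andbT; apply/negP => /apC; rewrite (negbTE component_notin_v).
- apply/allP => t; rewrite inE => /orP[/eqP ->|/apC /(subsetP component_sub_setDB) //].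
  by rewrite !inE vNB vV.
- change (path (adj m) v (rcons [:: a, w & p] v)).
  rewrite rcons_path (adj_sym graph_m) -[last v _]/(last a (w :: p)) -bl vb andbT /=.
  by rewrite va.
Qed.

Lemma cycle_meets_component_sub s :
  is_cycle m V s -> has (mem C) s -> {subset s <= v |: C}.
Proof.
move=> cs /hasP[c sc cC]; case: (is_cycleP graph_m cs) => us sV _ cyc.
have cNv : c != v by apply: contraNneq component_notin_v => <-.
have onPath a p : path (adj m) a p -> {subset a :: p <= V} -> v \notin a :: p ->
    c \in a :: p -> {subset a :: p <= C}.
  move=> ap apV vNap cap z zap.
  by rewrite (path_mem_component ap apV vNap zap) -(path_mem_component ap apV vNap cap).
case: (boolP (v \in s)) => [vs|vNs] z.
- case: (rot_to vs) => i t rot_s.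
  have mem_s u : (u \in s) = (u \in v :: t) by rewrite -rot_s mem_rot.
  case: t rot_s mem_s => [|a p] rot_s mem_s; first by move: sc; rewrite mem_s inE (negbTE cNv).
  have cyc' : path (adj m) v (rcons (a :: p) v) by rewrite -(rot_cycle i) rot_s in cyc.
  have vNap : v \notin a :: p by have := us; rewrite -(rot_uniq i) rot_s => /andP[].
  have apV : {subset a :: p <= V} by move=> t tp; apply: sV; rewrite mem_s inE tp orbT.
  move: cyc'; rewrite /= rcons_path => /andP[_ /andP[ap _]].
  have capC := onPath a p ap apV vNap.
  rewrite mem_s inE => /orP[/eqP ->|zap]; first exact: setU11.
  rewrite setU1r // capC //.
  by move: sc; rewrite mem_s inE (negbTE cNv).
- case: s us sV cyc cs sc vNs => [//|a p] _ sV cyc _ sc vNs zs.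
  move: cyc; rewrite /= rcons_path => /andP[ap _].
  by rewrite setU1r // (onPath a p ap sV vNs sc z zs).
Qed.

Lemma no_cycle_meets_component s : is_cycle m V s -> ~~ has (mem C) s.
Proof.
move=> cs; apply/negP => sC; have sub := cycle_meets_component_sub cs sC.
case: (boolP (v \in s)) => [vs|vNs].
- apply: no_cycle_v; exists s; split => //; apply: (is_cycle_sub cs) => z /sub.
  by case/setU1P=> [->|/(subsetP component_sub_setDB) //]; rewrite inE vNB.
- case: treeC => _ /(_ s) /negP; apply; apply: (is_cycle_sub cs) => z zs.
  by case/setU1P: (sub z zs) => // zv; rewrite -zv zs in vNs.
Qed.

Lemma comp_of_component (W : {set T}) c :
  C \subset W -> W \subset V :\ v -> c \in C -> comp_of m W c = C.
Proof.
move=> CW WV cC; apply/setP => y; apply/idP/idP => [|yC].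
- rewrite inE => /andP[_ /connectP[p cp ->]]; case: (path_adj_in cp) => pW {}cp.
  have cpV t : t \in c :: p -> t \in V :\ v.
    by rewrite inE => /orP[/eqP ->|/pW]; apply/(subsetP WV); rewrite // (subsetP CW).
  rewrite (path_mem_component cp) ?mem_last //.
  + by move=> t /cpV; rewrite inE => /andP[].
  + by apply/negP => /cpV; rewrite !inE eqxx.
- rewrite inE (subsetP CW _ yC); apply: connect_adj_in_sub CW _.
  by case: treeC => Ccon _; exact: Ccon.
Qed.

(* A shortest path from [v] leaves [v] only once, so it stays on one side of [C]. *)
Lemma comp_of_setD_component (W : {set T}) y :
  W \subset V -> v \in W -> y \in comp_of m W v -> y \notin C -> y \in comp_of m (W :\: C) v.
Proof.
move=> WV vW; rewrite inE => /andP[_ /connectP[p0 /shortenP[p vp up _] ->]] {p0}.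
case: (path_adj_in vp) => pW {}vp; case: p vp up pW => [|a p] vp up pW yNC.
  by rewrite mem_comp_of // inE vW component_notin_v.
case/andP: vp => va ap; case/andP: up => vNap _.
have apV : {subset a :: p <= V} by move=> t /pW /(subsetP WV).
have apNC t : t \in a :: p -> t \notin C.
  move=> tap; rewrite (path_mem_component ap apV vNap tap).
  by rewrite -(path_mem_component ap apV vNap (mem_last a p)).
have vapW' : {subset v :: a :: p <= W :\: C}.
  move=> t; rewrite inE => /orP[/eqP ->|tap]; first by rewrite inE vW component_notin_v.
  by rewrite inE apNC ?pW.
rewrite inE vapW' ?mem_last //=; apply/connectP; exists (a :: p) => //.
by apply: path_adj_in_intro vapW'; rewrite /= va.
Qed.

Section Extension.
Variables (k : nat) (X : {set T}).
Hypotheses (v_large : 7 * k < #|nbhd m V v|) (B_small : #|B| <= 2 * k).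
Hypotheses (v_adj_C : exists2 u, u \in C & u \in nbhd m V v) (solX : feasible m (V :\: C) k X).

Let K := comp_of m ((V :\: C) :\: X) v.

Lemma component_sub_setD_solution : C \subset V :\: X.
Proof.
case: solX => XVC _ _; apply/subsetP => x xC.
rewrite inE (subsetP (subset_trans component_sub_setDB (subsetDl V B)) x xC) andbT.
by apply: contraTN xC => /(subsetP XVC); rewrite inE => /andP[].
Qed.

Lemma v_mem_setD_solution (vNX : v \notin X) : v \in (V :\: C) :\: X.
Proof. by rewrite !inE vNX component_notin_v vV. Qed.

Lemma nbhd_card_le (vNX : v \notin X) :
  #|nbhd m V v| <= #|nbhd m V v :&: C| + #|X| + #|K :\ v|.
Proof.
apply: (@leq_trans #|(nbhd m V v :&: C :|: X) :|: (K :\ v)|); last first.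
  by apply: leq_trans (leq_card_setU _ _) _; rewrite leq_add2r leq_card_setU.
apply/subset_leq_card/subsetP => t tN; rewrite !in_setU in_setI tN /=.
case: (boolP (t \in C)) => //= tNC; case: (boolP (t \in X)) => //= tNX.
move: tN; rewrite inE => /and3P[tV tv vt].
have tK : t \in (V :\: C) :\: X by rewrite !inE tNX tNC tV.
rewrite in_setD1 tv inE tK /=; apply: connect1; by rewrite /adj_in v_mem_setD_solution // tK vt.
Qed.

Lemma clique_comp_v_acyclic (vNX : v \notin X) : is_clique m K -> acyclic_set m K.
Proof.
move=> Kcl s; apply/negP => cs; case: (is_cycleP graph_m cs) => us sK _ _.
have KV : K \subset V.
  by apply: subset_trans (comp_of_sub _ _ _) _; apply/subsetP => t; rewrite !inE => /and3P[].
have vK : v \in K by rewrite mem_comp_of ?v_mem_setD_solution.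
have s_gt2 := clique_cycle_size graph_m Kcl cs.
have s_le : size s <= #|K| by rewrite -(card_uniqP us); apply/subset_leq_card/subsetP.
have K_card : #|K| = #|K :\ v|.+1 by rewrite (cardsD1 v K) vK.
have KB_card := clique_setD_card vK KV Kcl.
have Kv_le : #|K :\ v| <= #|B| + #|K :\ v :\: B|.
  apply: leq_trans (leq_card_setU _ _); apply/subset_leq_card/subsetP => t.
  by rewrite !inE; case: (t \in B).
have NC_card := component_nbhd_card.
have N_le := nbhd_card_le vNX.
case: solX => _ Xk _.
lia.
Qed.

Lemma component_sub_comp_v (vNX : v \notin X) : C \subset comp_of m (V :\: X) v.
Proof.
case: v_adj_C => u uC; rewrite inE => /and3P[_ _ vu].
have CW := component_sub_setD_solution; have vW : v \in V :\: X by rewrite inE vNX vV.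
apply/subsetP => c cC; rewrite inE (subsetP CW c cC).
apply: connect_trans (connect1 (_ : adj_in m _ v u)) _; first by rewrite /adj_in vW (subsetP CW).
by apply: connect_adj_in_sub CW _; case: treeC => Ccon _; exact: Ccon.
Qed.

Lemma comp_v_acyclic (vNX : v \notin X) : acyclic_set m (comp_of m (V :\: X) v).
Proof.
move=> s; apply/negP => cs; case: (is_cycleP graph_m cs) => _ sD _ _.
have DV : comp_of m (V :\: X) v \subset V.
  by apply: subset_trans (comp_of_sub _ _ _) (subsetDl _ _).
have sNC := no_cycle_meets_component (is_cycle_sub cs (fun t ts => subsetP DV t (sD t ts))).
have sK : {subset s <= K}.
  move=> t ts; rewrite /K setDDl setUC -setDDl.
  apply: comp_of_setD_component (subsetDl _ _) _ (sD t ts) _; first by rewrite inE vNX vV.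
  by apply: contra sNC => tC; apply/hasP; exists t.
case: solX => _ _ /(_ K) [|Kcl|[_ Kac]]; first by exists v; rewrite // v_mem_setD_solution.
- by move: (clique_comp_v_acyclic vNX Kcl s) => /negP; apply; exact: is_cycle_sub cs sK.
- by move: (Kac s) => /negP; apply; exact: is_cycle_sub cs sK.
Qed.

Lemma feasible_extend : feasible m V k X.
Proof.
case: (solX) => XVC Xk solX'; split => //; first exact: subset_trans XVC (subsetDl _ _).
move=> _ [x xW ->].
case: (boolP [exists c in comp_of m (V :\: X) x, c \in C]) => [|/exists_inPn DNC].
- case/exists_inP => c cD cC; rewrite (comp_of_eq graph_m cD); right.
  case: (boolP (v \in X)) => vX.
    rewrite (comp_of_component component_sub_setD_solution _ cC) //.
    by apply/subsetP => t; rewrite !inE => /andP[tNX ->]; rewrite andbT; apply: contraNneq tNX => ->.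
  have cv : c \in comp_of m (V :\: X) v by exact: (subsetP (component_sub_comp_v vX)).
  by rewrite -(comp_of_eq graph_m cv); split; [exact: comp_of_connected | exact: comp_v_acyclic].
- have DW : comp_of m (V :\: X) x \subset (V :\: C) :\: X.
    apply/subsetP => t tD; have := subsetP (comp_of_sub _ _ _) t tD.
    by rewrite !inE (negbTE (DNC t tD)) => /andP[-> ->].
  rewrite (comp_of_restrict xW _ DW); first by apply: solX'; exists x; rewrite // (subsetP DW) ?mem_comp_of.
  by apply/subsetP => t; rewrite !inE => /and3P[-> _ ->].
Qed.

End Extension.
End ClosedComponent.
End CycleFreeAtVertex.

Theorem mainTheorem8 (T : finType) (m : T -> T -> nat) (V : {set T}) (k : nat)
  (v : T) (B C : {set T}) :
  multigraph m ->
  v \in V ->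
  large_sparse m V k v ->
  B \subset V :\ v ->
  #|B| <= 2 * k ->
  ~ cycle_through m (V :\: B) v ->
  is_component m (V :\ v :\: B) C ->
  (exists2 u, u \in C & u \in nbhd m V v) ->
  is_tree m C ->
  (forall x y, x \in C -> y \in B -> ~~ adj m x y) ->
  (yes_instance m V k <-> yes_instance m (V :\: C) k).
Proof.
move=> graph_m vV /andP[v_large _] BV B_small no_cycle_v compC v_adj_C treeC C_B.
have vNB : v \notin B by apply: contraL vV => /(subsetP BV); rewrite !inE eqxx.
split; first exact: yes_instance_setD.
case=> X solX; exists X.
exact: (feasible_extend graph_m vV vNB no_cycle_v compC C_B treeC v_large B_small v_adj_C solX).
Qed.
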